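(* Let $I\subseteq\{1,\dots,N\}$ with cardinality $k$, $2\le k\le N$, and let $v$ be the center of the face $\Delta_I$, i.e. $v_i=1/k$ for $i\in I$ and $v_i=0$ otherwise. Then $v$ is a linearly stable equilibrium if $\alpha<(k-1)/(k-2)$, and a linearly unstable equilibrium if $\alpha>(k-1)/(k-2)$ (with the convention $(k-1)/(k-2)=+\infty$ when $k=2$).
   Context: Let $N\ge3$, $\alpha>1$, and $A_{i,j}=1-\delta_{i,j}$ for $i,j\le N$. Let $\Delta=\{v\in\mathbb R_+^N:\sum_iv_i=1,\ v_i\le3/4\ \forall i\}$ and $\Delta_I=\{v\in\Delta:v_i=0\ \forall i\notin I\}$. For $v$ with nonnegative coordinates let $v^\alpha=(v_i^\alpha)_i$, $H(v)=\sum_{i\neq j}v_i^\alpha v_j^\alpha$, $\pi_i(v)=v_i^\alpha(Av^\alpha)_i/H(v)$, and on $\Delta$ let $F(v)=-v+\pi(v)$. An equilibrium is $v\in\Delta$ with $F(v)=0$. With $DF(v)$ the differential at $v$ of $v\mapsto-v+\pi(v)$ acting on $\{x:\sum_ix_i=0\}$, an equilibrium is linearly stable if all eigenvalues of $DF(v)$ have negative real parts and linearly unstable if some eigenvalue has positive real part. *)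

From HB Require Import structures.
From mathcomp Require Import all_boot all_order all_algebra.
From mathcomp Require Import all_classical all_reals all_analysis.
From mathcomp Require Import complex.
Set Implicit Arguments. Unset Strict Implicit. Unset Printing Implicit Defensive.
Import Order.TTheory GRing.Theory Num.Theory.
Local Open Scope ring_scope.

Section Defs.
Variables (R : realType) (N : nat).

Definition Amat : 'M[R]_N := \matrix_(i, j) (i != j)%:R.

(* The paper only uses nonnegative coordinates;
   to be able to speak of the differential at boundary points of the
   orthant we use |v_i|^alpha, which coincides with v_i^alpha for v_i >= 0
   and is C^1 for alpha > 1. *)
Definition vpow (alpha : R) (v : 'rV[R]_N) : 'rV[R]_N :=
  \row_i (powR `|v ord0 i| alpha).

Definition Hf (alpha : R) (v : 'rV[R]_N) : R :=
  \sum_(i < N) \sum_(j < N | i != j) vpow alpha v ord0 i * vpow alpha v ord0 j.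

Definition pif (alpha : R) (v : 'rV[R]_N) : 'rV[R]_N :=
  \row_i (vpow alpha v ord0 i * (\sum_(j < N) Amat i j * vpow alpha v ord0 j)
          / Hf alpha v).

Definition Ff (alpha : R) (v : 'rV[R]_N) : 'rV[R]_N := - v + pif alpha v.

Definition Simplex : set 'rV[R]_N :=
  [set v | (forall i, 0 <= v ord0 i /\ v ord0 i <= 3 / 4) /\
           \sum_(i < N) v ord0 i = 1].

Definition equilibrium (alpha : R) (v : 'rV[R]_N) : Prop :=
  Simplex v /\ Ff alpha v = 0.

(* DF(v): the Jacobian (differential) of v |-> -v + pi(v) at v; with row
   vectors the differential is x |-> x *m DF v. *)
Definition DF (alpha : R) (v : 'rV[R]_N) : 'M[R]_N := jacobian (Ff alpha) v.

(* lambda is an eigenvalue of the linear map M acting on the invariant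
   subspace {x : sum_i x_i = 0} (complexified). *)
Definition eigenvalue_on_tangent (M : 'M[R]_N) (lambda : R[i]) : Prop :=
  exists x : 'rV[R[i]]_N, x != 0 /\ \sum_(i < N) x ord0 i = 0 /\
    x *m map_mx (fun r : R => r%:C%C) M = lambda *: x.

Definition linearly_stable (alpha : R) (v : 'rV[R]_N) : Prop :=
  equilibrium alpha v /\
  forall lambda, eigenvalue_on_tangent (DF alpha v) lambda -> Re lambda < 0.

Definition linearly_unstable (alpha : R) (v : 'rV[R]_N) : Prop :=
  equilibrium alpha v /\
  exists lambda, eigenvalue_on_tangent (DF alpha v) lambda /\ 0 < Re lambda.

Definition face_center (I : {set 'I_N}) : 'rV[R]_N :=
  \row_i (if i \in I then (#|I|%:R)^-1 else 0).

End Defs.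

From HB Require Import structures.
From mathcomp Require Import all_boot all_order all_algebra.
From mathcomp Require Import all_classical all_reals all_analysis.
From mathcomp Require Import complex ring lra.
Import Order.TTheory GRing.Theory Num.Theory.
Import numFieldNormedType.Exports.
Local Open Scope ring_scope.
Local Open Scope classical_set_scope.

(* Since alpha > 1, v |-> |v_j|^alpha has zero derivative wherever v_j = 0, so
   at the center of the face Delta_I (k = #|I|) the Jacobian of F is -Id on the
   coordinates outside I, and by the symmetry of the center it is
   (kappa - 1) Id + beta J on the coordinates in I, where J is the all-ones
   matrix and kappa = alpha (k - 2) / (k - 1).  On vectors whose coordinates sum
   to zero the part beta J drops out, so the only eigenvalues are -1 and
   kappa - 1, the latter realized by e_i0 - e_i1 for i0 <> i1 in I; and
   kappa < 1 exactly when alpha < (k - 1) / (k - 2). *)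

Section PowRNorm.
Context {R : realType} (alpha : R).

Lemma is_derive_powR_norm0 : 1 < alpha ->
  is_derive (0 : R) 1 (fun x : R => `|x| `^ alpha) 0.
Proof.
move=> a1; pose g (x : R) := `|x| `^ alpha.
have L : h^-1 *: ((g \o shift 0) (h *: 1) - g 0) @[h --> (0 : R)^'] --> 0.
  apply/cvgr0Pnorm_lt => e e0.
  have a0 : 0 < alpha - 1 by rewrite subr_gt0.
  near=> h.
  have hn0 : h != 0 by near: h; exact: nbhs_dnbhs_neq.
  rewrite /g /= normr0 powR0 ?gt_eqF ?(lt_trans ltr01) // subr0 addr0 [h%:A]mulr1.
  rewrite normrZ normfV (ger0_norm (powR_ge0 _ _)).
  rewrite -(mulr_powRB1 (normr_ge0 h) (lt_trans ltr01 a1)).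
  rewrite mulrA mulVf ?normr_eq0 // mul1r.
  have -> : e = (e `^ (alpha - 1)^-1) `^ (alpha - 1).
    by rewrite -powRrM mulVf ?gt_eqF // powRr1 // ltW.
  rewrite gt0_ltr_powR // ?nnegrE ?normr_ge0 ?powR_ge0 //.
  near: h.
  by apply: dnbhs0_lt; exact: powR_gt0.
split; first exact: (cvgP _ L).
exact: cvg_lim L.
Unshelve. all: by end_near. Qed.

Lemma is_derive_powR_norm_gt0 (x : R) : 0 < x ->
  is_derive x 1 (fun y : R => `|y| `^ alpha) (alpha * x `^ (alpha - 1)).
Proof.
move=> x0; apply: near_eq_is_derive (is_derive1_powR alpha x0).
near=> y; rewrite ger0_norm // ltW //.
near: y; exact: lt_nbhsr.
Unshelve. all: by end_near. Qed.

End PowRNorm.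

Section RowCoordinates.
Context {R : realType} {n : nat}.
Implicit Types (p e : 'rV[R]_n) (g : R -> R).

Lemma derive_row_coord p e j : 'D_e (fun v : 'rV[R]_n => v ord0 j) p = e ord0 j.
Proof.
have := derive_mx (@derivable_id _ _ p e); rewrite derive_id => /matrixP/(_ ord0 j).
by rewrite mxE => ->.
Qed.

Lemma is_derive_row_coord p e j :
  is_derive p e (fun v : 'rV[R]_n => v ord0 j) (e ord0 j).
Proof.
split; last exact: derive_row_coord.
exact/diff_derivable/differentiable_coord.
Qed.

Lemma differentiable_comp_row_coord {g p j d} :
  is_derive (p ord0 j) 1 g d -> differentiable (fun v : 'rV[R]_n => g (v ord0 j)) p.
Proof.
case=> dg _; apply: (differentiable_comp (differentiable_coord p ord0 j)).
exact/derivable1_diffP.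
Qed.

Lemma is_derive_comp_row_coord {g p j d} e :
  is_derive (p ord0 j) 1 g d ->
  is_derive p e (fun v : 'rV[R]_n => g (v ord0 j)) (e ord0 j * d).
Proof.
move=> hd; split; first by apply: diff_derivable; exact: differentiable_comp_row_coord hd.
have dg : differentiable g (p ord0 j) by case: hd => h _; exact/derivable1_diffP.
rewrite deriveE; last exact: differentiable_comp_row_coord hd.
rewrite -[fun v => _]/(g \o fun v : 'rV[R]_n => v ord0 j).
rewrite diff_comp //=; last exact: differentiable_coord.
rewrite -[X in 'd g _ X]deriveE ?derive_row_coord; last exact: differentiable_coord.
by rewrite deriv1E ?derive1E ?derive_val //; case: hd.
Qed.

Lemma differentiable_row_of_coord m (f : 'rV[R]_n -> 'rV[R]_m) p :
  (forall i, differentiable (fun v => f v ord0 i) p) -> differentiable f p.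
Proof.
move=> fi; have -> : f = \sum_(i < m) (fun v => f v ord0 i *: 'e_i).
  by apply/funext => v; rewrite fct_sumE -row_sum_delta.
by apply: differentiable_sum => i; exact: differentiableZl.
Qed.

Lemma jacobian_row_coord m (f : 'rV[R]_n -> 'rV[R]_m) p j i :
  differentiable f p -> 'J f p j i = 'D_('e_j) (fun v => f v ord0 i) p.
Proof.
move=> df; transitivity (row j ('J f p) ord0 i); first by rewrite [RHS]mxE.
by rewrite rowE -deriveEjacobian // derive_mx ?mxE //; exact: diff_derivable.
Qed.

Lemma is_derive_inv {f : 'rV[R]_n -> R} {p e df} : f p != 0 ->
  is_derive p e f df -> is_derive p e (fun v => (f v)^-1) (- f p ^- 2 * df).
Proof.
move=> fp0 [fd <-]; split; first exact: derivableV.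
by rewrite deriveV.
Qed.

End RowCoordinates.

Section VpowSums.
Context {R : realType} {N : nat} (alpha : R).
Implicit Types (v : 'rV[R]_N) (i j : 'I_N).

Definition vpow_coord j v : R := vpow alpha v ord0 j.
Definition vpow_sum : 'rV[R]_N -> R := \sum_(j < N) vpow_coord j.
Definition vpow_sum2 : 'rV[R]_N -> R := \sum_(j < N) vpow_coord j * vpow_coord j.

Lemma vpow_coordE j : vpow_coord j = fun v => `|v ord0 j| `^ alpha.
Proof. by apply/funext => v; rewrite /vpow_coord mxE. Qed.

Lemma sum_Amat_vpowE v i :
  \sum_(j < N) Amat R N i j * vpow alpha v ord0 j = vpow_sum v - vpow_coord i v.
Proof.
rewrite /vpow_sum fct_sumE [in RHS](bigD1 i) //= addrAC subrr add0r.
rewrite (bigD1 i) //= mxE eqxx mul0r add0r.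
by apply: eq_bigr => j ji; rewrite mxE eq_sym ji mul1r.
Qed.

Lemma HfE v : Hf alpha v = vpow_sum v * vpow_sum v - vpow_sum2 v.
Proof.
rewrite /Hf /vpow_sum2 fct_sumE {1}/vpow_sum fct_sumE mulr_suml -sumrB.
apply: eq_bigr => i _; rewrite -mulrBr -sum_Amat_vpowE mulr_sumr big_mkcond /=.
apply: eq_bigr => j _; rewrite [Amat R N i j]mxE /vpow_coord.
by case: (i != j); rewrite ?mulr1n ?mulr0n ?mul1r ?mul0r ?mulr0.
Qed.

Lemma Hf_funE : Hf alpha = vpow_sum * vpow_sum - vpow_sum2.
Proof. by apply/funext => v; rewrite HfE. Qed.

Lemma Ff_coordE v i : Ff alpha v ord0 i =
  - v ord0 i + vpow_coord i v * (vpow_sum v - vpow_coord i v) / Hf alpha v.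
Proof. by rewrite /Ff mxE [(- v) _ _]mxE [pif _ _ _ _]mxE sum_Amat_vpowE. Qed.

Lemma Ff_coord_funE i : (fun v => Ff alpha v ord0 i) =
  - (fun v => v ord0 i) +
  vpow_coord i * (vpow_sum - vpow_coord i) * (fun v => (Hf alpha v)^-1).
Proof. by apply/funext => v; rewrite Ff_coordE. Qed.

End VpowSums.

Section FaceJacobian.
Context {N : nat} (I : {set 'I_N}).

(* Rows index the direction of differentiation, as in [jacobian]. *)
Definition face_jacobian {C : pzRingType} (kappa beta : C) : 'M[C]_N :=
  \matrix_(m, i) (- (m == i)%:R +
    (if i \in I then kappa * (m == i)%:R + beta * (m \in I)%:R else 0)).

Lemma map_face_jacobian (C D : pzRingType) (f : {rmorphism C -> D}) kappa beta :
  map_mx f (face_jacobian kappa beta) = face_jacobian (f kappa) (f beta).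
Proof.
apply/matrixP => m i; rewrite !mxE rmorphD rmorphN rmorph_nat.
by case: (i \in I); rewrite ?rmorph0 // rmorphD !rmorphM !rmorph_nat.
Qed.

Lemma row_delta_coord (C : pzSemiRingType) m j :
  ('e_m : 'rV[C]_N) ord0 j = (m == j)%:R.
Proof. by rewrite mxE eqxx eq_sym. Qed.

Lemma sum_pred_eq_nat (C : pzSemiRingType) (P : pred 'I_N) m :
  \sum_(j | P j) (m == j)%:R = (P m)%:R :> C.
Proof.
rewrite big_mkcond (bigD1 m) //= eqxx big1 => [|j /negbTE jm]; last first.
  by rewrite eq_sym jm; case: (P j).
by rewrite addr0; case: (P m).
Qed.

Lemma sum_mul_eq_nat (C : pzSemiRingType) (x : 'I_N -> C) i :
  \sum_(m < N) x m * (m == i)%:R = x i.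
Proof.
rewrite (bigD1 i) //= eqxx mulr1 big1 ?addr0 // => m /negbTE mi.
by rewrite mi mulr0.
Qed.

Lemma face_jacobian_mulmx (C : comPzRingType) (kappa beta : C) (x : 'rV[C]_N) i :
  (x *m face_jacobian kappa beta) ord0 i = - x ord0 i +
    (if i \in I then kappa * x ord0 i + beta * \sum_(m in I) x ord0 m else 0).
Proof.
rewrite mxE; under eq_bigr => m _ do rewrite mxE mulrDr mulrN.
rewrite big_split /= sumrN sum_mul_eq_nat; congr (_ + _).
case: (i \in I); last by rewrite big1 // => m _; rewrite mulr0.
under eq_bigr => m _ do rewrite mulrDr mulrCA (mulrCA _ beta).
rewrite big_split /= -!mulr_sumr sum_mul_eq_nat [in RHS]big_mkcond.
congr (_ + _ * _); apply: eq_bigr => m _.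
by case: (m \in I); rewrite ?mulr1n ?mulr0n ?mulr1 ?mulr0.
Qed.

Lemma face_jacobian_eigenvalue {C : idomainType} {kappa beta lam : C}
    {x : 'rV[C]_N} :
  x != 0 -> \sum_(i < N) x ord0 i = 0 ->
  x *m face_jacobian kappa beta = lam *: x -> lam = -1 \/ lam = kappa - 1.
Proof.
move=> x_neq0 sum_x0 eig.
have eig_i i : - x ord0 i + (if i \in I then
    kappa * x ord0 i + beta * \sum_(m in I) x ord0 m else 0) = lam * x ord0 i.
  by rewrite -face_jacobian_mulmx eig mxE.
have [->|lam_neqN1] := eqVneq lam (-1); [by left | right].
have x_off i : i \notin I -> x ord0 i = 0.
  move=> iNI; have := eig_i i; rewrite (negbTE iNI) addr0 -mulN1r => /eqP.
  rewrite eq_sym -subr_eq0 -mulrBl mulf_eq0 subr_eq0 (negbTE lam_neqN1).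
  by move/eqP.
have sum_I0 : \sum_(m in I) x ord0 m = 0.
  by rewrite -[RHS]sum_x0 [RHS](bigID (mem I)) /= [X in _ = _ + X]big1 ?addr0.
have [i x_i] : exists i, x ord0 i != 0.
  apply/existsP; apply: contraNT x_neq0 => /existsPn x0.
  by apply/eqP/rowP => j; rewrite mxE; exact/eqP/negPn/x0.
have iI : i \in I by apply/negPn/negP => /x_off xi0; rewrite xi0 eqxx in x_i.
have := eig_i i; rewrite iI sum_I0 mulr0 addr0 => h.
by apply: (mulIf x_i); rewrite -h; ring.
Qed.

Lemma face_jacobian_eigenvector {C : comNzRingType} (kappa beta : C) {i0 i1} :
  i0 \in I -> i1 \in I -> i0 != i1 ->
  let x : 'rV[C]_N := 'e_i0 - 'e_i1 in
  [/\ x != 0, \sum_(j < N) x ord0 j = 0 &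
      x *m face_jacobian kappa beta = (kappa - 1) *: x].
Proof.
move=> i0I i1I i01 x.
have x_j j : x ord0 j = (i0 == j)%:R - (i1 == j)%:R.
  by rewrite /x mxE [_ (- _) _ _]mxE !row_delta_coord.
have sum_x (P : pred 'I_N) : \sum_(j | P j) x ord0 j = (P i0)%:R - (P i1)%:R.
  by rewrite (eq_bigr _ (fun j _ => x_j j)) sumrB !sum_pred_eq_nat.
split.
- apply/eqP => /rowP/(_ i0); rewrite x_j mxE eqxx eq_sym (negbTE i01) subr0.
  by move/eqP; rewrite oner_eq0.
- by rewrite sum_x subrr.
apply/rowP => j; rewrite face_jacobian_mulmx sum_x i0I i1I subrr mulr0 addr0.
rewrite [RHS]mxE; case: ifP => jI; first by ring.
have/negbTE i0j : i0 != j by apply: contraFneq jI => <-.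
have/negbTE i1j : i1 != j by apply: contraFneq jI => <-.
by rewrite x_j i0j i1j subrr mulr0 oppr0 addr0.
Qed.

End FaceJacobian.

Definition face_kappa {R : realFieldType} (alpha : R) (k : nat) : R :=
  alpha * (k%:R - 2) / (k%:R - 1).
Definition face_beta {R : realFieldType} (alpha : R) (k : nat) : R :=
  alpha / (k%:R - 1) - 2 * alpha / k%:R.

Lemma face_kappaE (R : realFieldType) (alpha : R) k : (2 <= k)%N ->
  face_kappa alpha k = alpha * k.-2%:R / k.-1%:R.
Proof.
move=> k2; rewrite /face_kappa -natrB // subn2; congr (_ / _).
by rewrite -[in LHS](prednK (ltnW k2)) mulrSr addrK.
Qed.

Lemma face_kappa_lt1 (R : realFieldType) (alpha : R) k : (2 <= k)%N ->
  (k = 2%N \/ alpha < k.-1%:R / k.-2%:R) -> face_kappa alpha k < 1.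
Proof.
move=> k2; rewrite face_kappaE //; case: k k2 => [|[|[|j]]] // _.
  by rewrite mulr0 mul0r ltr01.
case=> // ha; rewrite ltr_pdivrMr ?ltr0n // mul1r.
by rewrite -ltr_pdivlMr ?ltr0n.
Qed.

Lemma face_kappa_gt1 (R : realFieldType) (alpha : R) k : (2 < k)%N ->
  k.-1%:R / k.-2%:R < alpha -> 1 < face_kappa alpha k.
Proof.
move=> k3 ha; rewrite face_kappaE; last exact: ltnW.
case: k k3 ha => [|[|[|j]]] // _ ha.
rewrite ltr_pdivlMr; last by rewrite ltr0n.
by rewrite mul1r -ltr_pdivrMr ?ltr0n.
Qed.

Section FaceCenter.
Context {R : realType} {N : nat} {alpha : R} {I : {set 'I_N}}.
Hypotheses (alpha_gt1 : 1 < alpha) (card_I_ge2 : (2 <= #|I|)%N).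

Let k : R := #|I|%:R.
Let p := face_center R I.
Let c : R := k^-1 `^ alpha.
(* [alpha * t] is the derivative of [x `^ alpha] at [k^-1]. *)
Let t : R := k^-1 `^ (alpha - 1).

Let alpha_gt0 : 0 < alpha. Proof. exact: lt_trans ltr01 alpha_gt1. Qed.
Let k_ge2 : 2 <= k. Proof. by rewrite /k ler_nat. Qed.
Let k_gt0 : 0 < k. Proof. by have := k_ge2; lra. Qed.
Let t_gt0 : 0 < t. Proof. by rewrite powR_gt0 // invr_gt0. Qed.
Let c_eq : c = k^-1 * t.
Proof. by rewrite /c /t mulr_powRB1 ?invr_ge0 ?(ltW k_gt0). Qed.

Lemma face_center_coord j : p ord0 j = if j \in I then k^-1 else 0.
Proof. by rewrite mxE. Qed.

Lemma vpow_face_center j : vpow_coord alpha j p = if j \in I then c else 0.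
Proof.
rewrite /vpow_coord mxE face_center_coord; case: (j \in I).
  by rewrite ger0_norm // invr_ge0 ltW.
by rewrite normr0 powR0 // gt_eqF.
Qed.

Lemma vpow_sum_face_center : vpow_sum alpha p = k * c.
Proof.
rewrite /vpow_sum fct_sumE (eq_bigr _ (fun j _ => vpow_face_center j)).
by rewrite -big_mkcond sumr_const mulr_natl.
Qed.

Lemma vpow_sum2_face_center : vpow_sum2 alpha p = k * (c * c).
Proof.
rewrite /vpow_sum2 fct_sumE (eq_bigr (fun j => if j \in I then c * c else 0)).
  by rewrite -big_mkcond sumr_const mulr_natl.
by move=> j _; rewrite mulrfctE vpow_face_center; case: (j \in I); rewrite ?mulr0.
Qed.

Lemma Hf_face_center : Hf alpha p = k * (k - 1) * (c * c).
Proof. by rewrite HfE vpow_sum_face_center vpow_sum2_face_center; ring. Qed.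

Lemma face_center_equilibrium : equilibrium alpha p.
Proof.
have k_inv_le : k^-1 <= 2^-1 by rewrite lef_pV2 ?posrE.
have := k_gt0; have := k_ge2; have := t_gt0 => *.
split.
  split=> [j|].
    by rewrite face_center_coord; case: (j \in I); split; rewrite ?invr_ge0; lra.
  rewrite (eq_bigr _ (fun j _ => face_center_coord j)) -big_mkcond sumr_const.
  by rewrite -mulr_natl mulfV // gt_eqF.
apply/rowP => i; rewrite Ff_coordE [RHS]mxE face_center_coord.
rewrite Hf_face_center vpow_sum_face_center vpow_face_center c_eq.
by case: (i \in I); field; rewrite gt_eqF ?lt0r_neq0 ?mulr_gt0 //; lra.
Qed.

Let Hf_neq0 : Hf alpha p != 0.
Proof.
rewrite Hf_face_center c_eq; have := k_ge2; have := t_gt0 => *.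
by rewrite gt_eqF // !mulr_gt0 ?invr_gt0 //; lra.
Qed.

Lemma is_derive_powR_norm_face_center j :
  is_derive (p ord0 j) 1 (fun x : R => `|x| `^ alpha)
    (if j \in I then alpha * t else 0).
Proof.
rewrite face_center_coord; case: (j \in I).
  by apply: is_derive_powR_norm_gt0; rewrite invr_gt0.
exact: is_derive_powR_norm0.
Qed.

Lemma is_derive_vpow_face_center e j : is_derive p e (vpow_coord alpha j)
  (if j \in I then alpha * t * e ord0 j else 0).
Proof.
rewrite vpow_coordE.
apply: is_derive_eq (is_derive_comp_row_coord e (is_derive_powR_norm_face_center j)) _.
by case: (j \in I); rewrite ?mulr0 // mulrC.
Qed.

Lemma differentiable_Ff_face_center : differentiable (Ff alpha) p.
Proof.
have du j : differentiable (vpow_coord alpha j) p.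
  rewrite vpow_coordE.
  exact: differentiable_comp_row_coord (is_derive_powR_norm_face_center j).
have dU : differentiable (vpow_sum alpha) p by exact: differentiable_sum.
have dH : differentiable (Hf alpha) p.
  rewrite Hf_funE; apply: differentiableD; first exact: differentiableM.
  by apply/differentiableN/differentiable_sum => j; exact: differentiableM.
apply: differentiable_row_of_coord => i; rewrite Ff_coord_funE.
apply: differentiableD; first exact/differentiableN/differentiable_coord.
apply: differentiableM; last exact: differentiableV.
by apply: differentiableM => //; apply: differentiableD => //; exact: differentiableN.
Qed.

Lemma derive_Ff_face_center e i :
  'D_e (fun v => Ff alpha v ord0 i) p = - e ord0 i +
    (if i \in I then face_kappa alpha #|I| * e ord0 i +
       face_beta alpha #|I| * \sum_(j in I) e ord0 j else 0).
Proof.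
set S := \sum_(j in I) e ord0 j.
have du := is_derive_vpow_face_center e.
have dU : is_derive p e (vpow_sum alpha) (alpha * t * S).
  apply: is_derive_eq (is_derive_sum du) _.
  by rewrite /S mulr_sumr [RHS]big_mkcond.
have dQ : is_derive p e (vpow_sum2 alpha) (2 * c * (alpha * t * S)).
  apply: is_derive_eq (is_derive_sum (fun j => is_deriveM (du j) (du j))) _.
  rewrite /S !mulr_sumr [RHS]big_mkcond; apply: eq_bigr => j _.
  by rewrite vpow_face_center; case: (j \in I); rewrite /GRing.scale /=; ring.
have dH : is_derive p e (Hf alpha) (2 * c * (k - 1) * (alpha * t * S)).
  rewrite Hf_funE; apply: is_derive_eq (is_deriveD (is_deriveM dU dU) (is_deriveN dQ)) _.
  by rewrite vpow_sum_face_center /GRing.scale /=; ring.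
have := is_deriveD (is_deriveN (is_derive_row_coord p e i))
  (is_deriveM (is_deriveM (du i) (is_deriveD dU (is_deriveN (du i))))
              (is_derive_inv Hf_neq0 dH)).
rewrite -Ff_coord_funE => -[_ ->]; rewrite !fctE /GRing.scale /=.
rewrite Hf_face_center vpow_sum_face_center vpow_face_center c_eq /face_kappa /face_beta.
have := k_ge2; have := t_gt0 => *.
by case: (i \in I); field; rewrite ?gt_eqF //; lra.
Qed.

Lemma DF_face_center :
  DF alpha p = face_jacobian I (face_kappa alpha #|I|) (face_beta alpha #|I|).
Proof.
apply/matrixP => m i.
rewrite /DF jacobian_row_coord; last exact: differentiable_Ff_face_center.
apply: etrans (derive_Ff_face_center _ _) _.
rewrite [RHS]mxE row_delta_coord; under eq_bigr do rewrite row_delta_coord.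
by rewrite sum_pred_eq_nat.
Qed.

Lemma face_center_tangent_eigenvalue lam :
  eigenvalue_on_tangent (DF alpha p) lam ->
  lam = (-1)%:C%C \/ lam = (face_kappa alpha #|I| - 1)%:C%C.
Proof.
case=> x [x_neq0 [sum_x0]]; rewrite DF_face_center map_face_jacobian => eig.
rewrite rmorphN1 rmorphB rmorph1; exact: face_jacobian_eigenvalue x_neq0 sum_x0 eig.
Qed.

Lemma face_center_tangent_eigenvalue_kappa :
  eigenvalue_on_tangent (DF alpha p) (face_kappa alpha #|I| - 1)%:C%C.
Proof.
have /card_gt0P[i0 i0I] : (0 < #|I|)%N by exact: ltnW.
have /card_gt0P[i1] : (0 < #|I :\ i0|)%N.
  by move: card_I_ge2; rewrite (cardsD1 i0 I) i0I.
rewrite !inE eq_sym => /andP[i01 i1I].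
have [x_neq0 sum_x0 eig] := face_jacobian_eigenvector I
  (face_kappa alpha #|I|)%:C%C (face_beta alpha #|I|)%:C%C i0I i1I i01.
exists ('e_i0 - 'e_i1); split=> //; split=> //.
by rewrite DF_face_center map_face_jacobian eig rmorphB rmorph1.
Qed.

Lemma linearly_stable_face_center :
  face_kappa alpha #|I| < 1 -> linearly_stable alpha p.
Proof.
move=> kappa_lt1; split=> [|lam]; first exact: face_center_equilibrium.
by case/face_center_tangent_eigenvalue=> ->; rewrite -complexRe ltcE /= eqxx /=; lra.
Qed.

Lemma linearly_unstable_face_center :
  1 < face_kappa alpha #|I| -> linearly_unstable alpha p.
Proof.
move=> kappa_gt1; split; first exact: face_center_equilibrium.
exists (face_kappa alpha #|I| - 1)%:C%C; split.
  exact: face_center_tangent_eigenvalue_kappa.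
by rewrite -complexRe ltcE /= eqxx /=; lra.
Qed.

End FaceCenter.

Theorem lemma4p2 (R : realType) (N : nat) (alpha : R) (I : {set 'I_N}) :
  (3 <= N)%N -> 1 < alpha -> (2 <= #|I|)%N ->
  ((#|I| = 2%N \/ alpha < (#|I|.-1)%:R / (#|I|.-2)%:R) ->
     linearly_stable alpha (face_center R I)) /\
  ((2 < #|I|)%N -> (#|I|.-1)%:R / (#|I|.-2)%:R < alpha ->
     linearly_unstable alpha (face_center R I)).
Proof.
move=> _ alpha_gt1 card_I_ge2; split=> [stable_range | card_I_gt2 unstable_range].
  by apply: linearly_stable_face_center => //; exact: face_kappa_lt1.
by apply: linearly_unstable_face_center => //; exact: face_kappa_gt1.
Qed.
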